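(* Let $(D,S)$ be a uniform steady-state bundle (as defined in the context). Then for any two channels $\mathcal{E},\mathcal{E}'\in D$, the phase steady-state spaces $S(\mathcal{E})$ and $S(\mathcal{E}')$ are isomorphic, i.e., they are in one-to-one correspondence.
   Context: Work with qubits on a lattice (in the thermodynamic limit); states are density matrices $\rho$ and observables $o$ have finite support and finite norm, with $\langle o|\rho\rangle=\mathrm{tr}(o^\dagger\rho)$. A quantum channel is a completely positive trace-preserving map. A channel $\mathcal{E}$ is called local if it obeys a Lieb–Robinson bound: there are constants $C,v,\alpha>0$ (depending only on the lattice and $\mathcal{E}$) such that for every state $\rho$, every observable $o_X$ of norm $1$ supported on $X$, every channel $\mathcal{V}_Y$ supported on $Y$, and every $t\ge 0$, $|\langle o_X|\mathcal{E}^t(\mathcal{V}_Y-\mathcal{I})|\rho\rangle|\le C\min(|X|,|Y|)\min(1,e^{\alpha(t-d_{XY}/v)})$, where $d_{XY}$ is the distance between $X$ and $Y$ and $\mathcal{I}$ is the identity map. A steady-state bundle $(D,S)$ consists of a connected open subset $D$ of the space of local channels together with an assignment to each $\mathcal{E}\in D$ of a convex set $S(\mathcal{E})$ of normalized states with $(\mathcal{E}-\mathcal{I})(\rho)=0$ for all $\rho\in S(\mathcal{E})$ (the phase steady states of $\mathcal{E}$; possibly a proper subset of all steady states). The bundle is uniform if $D$ can be covered by a family of open balls $\{B_i\}$ and there is a rate $\Delta>0$, independent of system size and uniform over all $B_i$, such that: for any $i$, any $\mathcal{E},\mathcal{E}'\in B_i$ and any $\rho\in S(\mathcal{E})$ there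 exists $\rho'\in S(\mathcal{E}')$ with $\mathcal{E}^t\rho'$ approaching $\rho$ exponentially, in the sense $|\langle o|\mathcal{E}^t\rho'-\rho\rangle|\le C_o e^{-\Delta t}\|o\|_\infty$ for every finitely supported observable $o$, with $C_o$ independent of $t$ and of the channels. *)

From HB Require Import structures.
From mathcomp Require Import all_boot all_order all_algebra.
From mathcomp Require Import finmap.
From mathcomp Require Import complex.
From mathcomp Require Import classical_sets reals.
From mathcomp.analysis Require Import sequences exp.

Unset Printing Implicit Defensive.

Import Order.TTheory GRing.Theory Num.Theory.
Local Open Scope ring_scope.
Local Open Scope complex_scope.

Section QLattice.
Variables (R : realType) (L : choiceType).
Local Notation C := R[i].

(* Qubits on the sites L.  A region is a finite set of sites X; the
   computational basis of the Hilbert space (C^2)^{(x) X} is indexed by the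
   configurations X -> bool. *)
Definition conf (X : {fset L}) := {ffun X -> bool}.
Definition op (X : {fset L}) := conf X -> conf X -> C.

(* value of a configuration at an arbitrary site (false outside the region) *)
Definition ext (Z : {fset L}) (a : conf Z) (l : L) : bool :=
  match (insub l : option Z) with Some z => a z | None => false end.

Arguments ext {Z}.

Definition restr (X Z : {fset L}) (a : conf Z) : conf X :=
  [ffun x : X => ext a (val x)].

Arguments restr X {Z}.

Definition agree_off (Y Z : {fset L}) (a b : conf Z) : bool :=
  [forall z : Z, (val z \notin Y) ==> (a z == b z)].

Arguments agree_off Y {Z}.

(* partial trace from Z down to X (over the sites of Z not in X) *)
Definition ptr (Z X : {fset L}) (A : op Z) : op X := fun s s' =>
  \sum_(a : conf Z) \sum_(a' : conf Z)
     (if [&& restr X a == s, restr X a' == s' & agree_off X a a']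
      then A a a' else 0).


Definition trace (X : {fset L}) (A : op X) : C := \sum_(s : conf X) A s s.

Definition psd (X : {fset L}) (A : op X) : Prop :=
  forall v : conf X -> C,
    0 <= \sum_(s : conf X) \sum_(s' : conf X) (v s)^* * A s s' * v s'.

Arguments trace {X}.
Arguments psd {X}.

(* Normalized states of the infinite lattice (states of the quasi-local
   algebra) = consistent families of finite-volume density matrices. *)
Record state := State {
  rho :> forall X : {fset L}, op X;
  rho_psd : forall X : {fset L}, psd (rho X);
  rho_tr : forall X : {fset L}, trace (rho X) = 1;
  rho_cons : forall X Y : {fset L}, fsubset X Y -> rho X = ptr Y X (rho Y) }.


(* finitely supported observables *)
Record obs := Obs { osupp : {fset L}; omat : op osupp }.

Definition pairing (o : obs) (r : state) : C :=
  \sum_(s : conf (osupp o)) \sum_(s' : conf (osupp o))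
     (omat o s s')^* * r (osupp o) s s'.

Definition vnorm (X : {fset L}) (v : conf X -> C) : R :=
  Num.sqrt (\sum_(s : conf X) complex.Re ((v s)^* * v s)).
Definition opapply (X : {fset L}) (A : op X) (v : conf X -> C) : conf X -> C :=
  fun s => \sum_(s' : conf X) A s s' * v s'.
Arguments vnorm {X}.
Arguments opapply {X}.

Definition opnorm (o : obs) : R :=
  sup [set r : R | exists v : conf (osupp o) -> C,
                     vnorm v = 1 /\ r = vnorm (opapply (omat o) v)].

Definition chan := state -> state.

Definition is_mix (lam : R) (r1 r2 r : state) : Prop :=
  forall X s s', r X s s' = lam%:C * r1 X s s' + (1 - lam)%:C * r2 X s s'.

(* (the restriction to states of) a trace-preserving positive linear map *)
Definition is_channel (E : chan) : Prop :=
  forall (lam : R) (r1 r2 r : state), 0 <= lam <= 1 ->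
    is_mix lam r1 r2 r -> is_mix lam (E r1) (E r2) (E r).

(* channels supported on a finite region Y: a CPTP map on op Y, given by
   its kernel K with (V rho)(a,a') = sum_(b,b') K a a' b b' rho(b,b') *)
Record lchan := LChan {
  lsupp : {fset L};
  kern : conf lsupp -> conf lsupp -> conf lsupp -> conf lsupp -> C;
  kern_CP : forall w : conf lsupp * conf lsupp -> C,
     0 <= \sum_(p : conf lsupp * conf lsupp) \sum_(q : conf lsupp * conf lsupp)
            (w p)^* * kern p.1 q.1 p.2 q.2 * w q;
  kern_TP : forall b b' : conf lsupp,
     \sum_(a : conf lsupp) kern a a b b' = (b == b')%:R }.



(* (V (x) id) applied to an operator on a region Z *)
Definition lchan_op (V : lchan) (Z : {fset L}) (A : op Z) : op Z := fun a a' =>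
  \sum_(b : conf Z) \sum_(b' : conf Z)
    (if agree_off (lsupp V) a b && agree_off (lsupp V) a' b'
     then kern V (restr (lsupp V) a) (restr (lsupp V) a')
                 (restr (lsupp V) b) (restr (lsupp V) b') * A b b'
     else 0).

Arguments lchan_op V {Z}.

(* s is the state V(r) of the infinite lattice *)
Definition lchan_state (V : lchan) (r s : state) : Prop :=
  forall X : {fset L},
    s X = ptr (X `|` lsupp V)%fset X (lchan_op V (r (X `|` lsupp V)%fset)).

Definition dist_set (dist : L -> L -> R) (X Y : {fset L}) : R :=
  inf [set r : R | exists x y, x \in X /\ y \in Y /\ r = dist x y].

(* Lieb--Robinson bound, t >= 0 a discrete time *)
Definition is_local (dist : L -> L -> R) (E : chan) : Prop :=
  exists (Cc v alpha : R), 0 < Cc /\ 0 < v /\ 0 < alpha /\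
    forall (r : state) (o : obs) (V : lchan) (s : state) (t : nat),
      opnorm o = 1 -> lchan_state V r s ->
      `| pairing o (iter t E s) - pairing o (iter t E r) |
        <= (Cc * Num.min (size (osupp o))%:R (size (lsupp V))%:R
               * Num.min 1 (expR (alpha * (t%:R
                     - dist_set dist (osupp o) (lsupp V) / v))))%:C.

Definition local_channel (dist : L -> L -> R) (E : chan) : Prop :=
  is_channel E /\ is_local dist E.

Definition is_metric (d : chan -> chan -> R) : Prop :=
  (forall E F, 0 <= d E F) /\ (forall E, d E E = 0) /\
  (forall E F, d E F = 0 -> E = F) /\ (forall E F, d E F = d F E) /\
  (forall E F G, d E G <= d E F + d F G).

Definition open_in_local (dist : L -> L -> R) (d : chan -> chan -> R)
    (D : set chan) : Prop :=
  forall E, D E -> exists2 e : R, 0 < e &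
    forall F, local_channel dist F -> d E F < e -> D F.

Definition rel_open (d : chan -> chan -> R) (D U : set chan) : Prop :=
  (forall E, U E -> D E) /\
  forall E, U E -> exists2 e : R, 0 < e & forall F, D F -> d E F < e -> U F.

Definition connected_in (d : chan -> chan -> R) (D : set chan) : Prop :=
  forall U1 U2 : set chan, rel_open d D U1 -> rel_open d D U2 ->
    (forall E, D E -> U1 E \/ U2 E) -> (forall E, ~ (U1 E /\ U2 E)) ->
    (forall E, ~ U1 E) \/ (forall E, ~ U2 E).

Definition convex_states (S : set state) : Prop :=
  forall (lam : R) (r1 r2 r : state), 0 <= lam <= 1 ->
    S r1 -> S r2 -> is_mix lam r1 r2 r -> S r.

Definition steady_state_bundle (dist : L -> L -> R) (d : chan -> chan -> R)
    (D : set chan) (S : chan -> set state) : Prop :=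
  [/\ forall E, D E -> local_channel dist E,
      open_in_local dist d D,
      connected_in d D &
      forall E, D E -> convex_states (S E) /\ forall r, S E r -> E r = r].

(* balls are given by (center, radius) pairs *)
Definition uniform_bundle (d : chan -> chan -> R)
    (D : set chan) (S : chan -> set state) : Prop :=
  exists B : set (chan * R),
    (forall b, B b -> 0 < b.2) /\
    (forall E, D E -> exists2 b, B b & d b.1 E < b.2) /\
    exists Delta : R, 0 < Delta /\
    exists Co : obs -> R,
      forall b, B b -> forall E E', D E -> D E' -> d b.1 E < b.2 -> d b.1 E' < b.2 ->
      forall r, S E r -> exists2 r', S E' r' &
        forall (o : obs) (t : nat),
          `| pairing o (iter t E r') - pairing o r |
            <= (Co o * expR (- (Delta * t%:R)) * opnorm o)%:C.

End QLattice.

Arguments is_metric {R L}.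
Arguments steady_state_bundle {R L}.
Arguments uniform_bundle {R L}.

From HB Require Import structures.
From mathcomp Require Import all_boot all_order all_algebra.
From mathcomp Require Import finmap.
From mathcomp Require Import complex.
From mathcomp Require Import classical_sets reals.
From mathcomp.analysis Require Import sequences exp.
From mathcomp Require Import boolp functions cardinality.
From mathcomp Require Import ring lra.

(* The exponential approach in the uniformity condition pins down its limit,
   so within one ball it yields an injection S(E) -> S(E'), and by symmetry one
   S(E') -> S(E); by Cantor-Bernstein S(E) and S(E') are equinumerous.  Hence
   "S(F) is equinumerous to S(E)" is locally constant on D, and a locally
   constant relation is constant on a connected set. *)

Import Order.TTheory GRing.Theory Num.Theory.
Import archimedean.Num.Theory archimedean.Num.Def.
Local Open Scope ring_scope.
Local Open Scope complex_scope.
Local Open Scope classical_set_scope.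
Local Open Scope card_scope.

Lemma le0_exp_decay (R : realType) (m K Delta : R) : 0 < Delta ->
  (forall t : nat, m <= K * expR (- (Delta * t%:R))) -> m <= 0.
Proof.
move=> Delta_gt0 decay; rewrite leNgt; apply/negP => m_gt0.
pose t := (truncn (K / (m * Delta))).+1.
have t_big : K / (m * Delta) < t%:R by apply: truncnS_gt.
have mexp_le : m * expR (Delta * t%:R) <= K.
  by rewrite -ler_pdivlMr ?expR_gt0 // -expRN.
have mexp_ge : m * (Delta * t%:R) <= m * expR (Delta * t%:R).
  by rewrite ler_pM2l // (le_trans _ (expR_ge1Dx _)) // lerDr.
move: t_big; rewrite ltr_pdivrMr ?mulr_gt0 // => Kt.
have : t%:R * (m * Delta) <= K by apply: le_trans mexp_le; lra.
by rewrite leNgt Kt.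
Qed.

Lemma eq_exp_decay (R : realType) (a b : R[i]) (K Delta : R) : 0 < Delta ->
  (forall t : nat, `|a - b| <= (K * expR (- (Delta * t%:R)))%:C) -> a = b.
Proof.
move=> Delta_gt0; rewrite normc_def => decay.
apply/eqP; rewrite -subr_eq0 -normr_eq0 eq_le normr_ge0 andbT normc_def.
rewrite -[0]/(0%:C) lecR.
by apply: (@le0_exp_decay _ _ K _ Delta_gt0) => t; rewrite -lecR.
Qed.

Lemma card_le_set_inj (T U : Type) (A : set T) (B : set U) (f : T -> U) :
  set_fun A B f -> set_inj A f -> A #<= B.
Proof.
move=> fAB f_inj; rewrite (card_le_eql (card_esym (inj_card_eq f_inj))).
by apply: subset_card_le => _ [x Ax <-]; apply: fAB.
Qed.

Lemma card_eq_set_bij {T : Type} {A B : set T} :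
  A #= B -> exists f : T -> T, set_bij A B f.
Proof.
have [A0 AB | /set0P [x0 _] /card_bijP [g [g' gK g'K]]] := eqVneq A set0.
  move/card_eqPle: AB => [_]; rewrite {1}A0 => /card_le0P B0.
  by exists id; rewrite A0 B0; split => // x.
exists ('valL_x0 (set_val \o g)); apply/valL_bijP; split.
- by move=> a _; apply: set_valP.
- by move=> a1 a2 _ _ /= /val_inj /(can_inj gK).
by move=> b /mem_set Bb; exists (g' (SigSub Bb)) => //=; rewrite g'K.
Qed.

Section States.
Variables (R : realType) (L : choiceType).

Lemma eq_state (r1 r2 : state R L) :
  (forall X s s', r1 X s s' = r2 X s s') -> r1 = r2.
Proof.
case: r1 r2 => [f1 ? ? ?] [f2 ? ? ?] /= eq_f.
have f12 : f1 = f2.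
  by apply: functional_extensionality_dep => X; apply/funext => s; apply/funext.
by subst f2; congr State; apply: Prop_irrelevance.
Qed.

Definition unit_obs (X : {fset L}) (s0 s1 : conf L X) : obs R L :=
  Obs R L X (fun s s' => ((s == s0) && (s' == s1))%:R).

Lemma pairing_unit_obs (r : state R L) (X : {fset L}) (s0 s1 : conf L X) :
  pairing R L (unit_obs X s0 s1) r = r X s0 s1.
Proof.
rewrite /pairing (bigD1 s0) //= [Y in _ + Y]big1 => [|s /negPf s_neq]; last first.
  by rewrite big1 // => s' _; rewrite s_neq rmorph0 mul0r.
rewrite addr0 (bigD1 s1) //= [Y in _ + Y]big1 => [|s' /negPf s'_neq]; last first.
  by rewrite s'_neq andbF rmorph0 mul0r.
by rewrite !eqxx rmorph1 mul1r addr0.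
Qed.

Lemma eq_state_pairing (r1 r2 : state R L) :
  (forall o, pairing R L o r1 = pairing R L o r2) -> r1 = r2.
Proof.
by move=> eq_r; apply: eq_state => X s s'; rewrite -!pairing_unit_obs.
Qed.

End States.

Section ExponentialApproach.
Variables (R : realType) (L : choiceType) (Delta : R) (Co : obs R L -> R).

Definition exp_converges (F : chan R L) (r' r : state R L) : Prop :=
  forall (o : obs R L) (t : nat),
    `| pairing R L o (iter t F r') - pairing R L o r |
      <= (Co o * expR (- (Delta * t%:R)) * opnorm R L o)%:C.

Hypothesis Delta_gt0 : 0 < Delta.

Lemma exp_converges_unique (F : chan R L) (r' r1 r2 : state R L) :
  exp_converges F r' r1 -> exp_converges F r' r2 -> r1 = r2.
Proof.
move=> conv1 conv2; apply: eq_state_pairing => o.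
apply: (@eq_exp_decay _ _ _ (2 * Co o * opnorm R L o) _ Delta_gt0) => t.
apply: le_trans (ler_distD (pairing R L o (iter t F r')) _ _) _.
rewrite distrC (le_trans (lerD (conv1 o t) (conv2 o t))) // -rmorphD lecR.
lra.
Qed.

Lemma card_le_exp_converges (F : chan R L) (A B : set (state R L)) :
  (forall r, A r -> exists2 r', B r' & exp_converges F r' r) -> A #<= B.
Proof.
move=> approx.
have /choice [g gP] : forall r, exists r', A r -> B r' /\ exp_converges F r' r.
  move=> r; case: (pselect (A r)) => [/approx [r' Br' conv] | nAr].
    by exists r'.
  by exists r => /nAr.
apply: (@card_le_set_inj _ _ _ _ g) =>
  [r /gP [] // | r1 r2 /set_mem A1 /set_mem A2].
move=> g12; have [_ conv1] := gP r1 A1; have [_ conv2] := gP r2 A2.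
by rewrite g12 in conv1; apply: exp_converges_unique conv1 conv2.
Qed.

End ExponentialApproach.

Section Connectedness.
Variables (R : realType) (L : choiceType).
Variables (d : chan R L -> chan R L -> R) (D : set (chan R L)).

Lemma connected_in_locally_constant (eqv : chan R L -> chan R L -> Prop) :
  connected_in R L d D ->
  (forall F, eqv F F) -> (forall F G, eqv F G -> eqv G F) ->
  (forall F G H, eqv F G -> eqv G H -> eqv F H) ->
  (forall F, D F -> exists2 e : R, 0 < e &
     forall G, D G -> d F G < e -> eqv F G) ->
  forall E E', D E -> D E' -> eqv E E'.
Proof.
move=> D_conn eqv_refl eqv_sym eqv_trans loc E E' DE DE'.
pose U1 F := D F /\ eqv E F; pose U2 F := D F /\ ~ eqv E F.
have U1_open : rel_open R L d D U1.
  split=> [F [] // | F [DF EF]]; have [e e_gt0 eqv_near] := loc F DF.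
  exists e => // G DG dFG; split=> //.
  exact: eqv_trans _ _ _ EF (eqv_near G DG dFG).
have U2_open : rel_open R L d D U2.
  split=> [F [] // | F [DF nEF]]; have [e e_gt0 eqv_near] := loc F DF.
  exists e => // G DG dFG; split=> // EG.
  exact: nEF (eqv_trans _ _ _ EG (eqv_sym _ _ (eqv_near G DG dFG))).
have U12_cover : forall F, D F -> U1 F \/ U2 F.
  by move=> F DF; have [EF | nEF] := pselect (eqv E F); [left | right].
have [U1_empty | U2_empty] := D_conn U1 U2 U1_open U2_open U12_cover
  (fun F '(conj (conj _ EF) (conj _ nEF)) => nEF EF).
  by case: (U1_empty E).
by apply: contrapT => nEE'; apply: (U2_empty E').
Qed.

End Connectedness.

Lemma uniform_bundle_locally_card_eq (R : realType) (L : choiceType)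
    (d : chan R L -> chan R L -> R) (D : set (chan R L))
    (S : chan R L -> set (state R L)) :
  (forall E F G, d E G <= d E F + d F G) ->
  uniform_bundle d D S ->
  forall F, D F -> exists2 e : R, 0 < e &
    forall G, D G -> d F G < e -> S F #= S G.
Proof.
move=> d_tri [B [_ [B_cover [Delta [Delta_gt0 [Co unif]]]]]] F DF.
have [b Bb dbF] := B_cover F DF.
exists (b.2 - d b.1 F) => [|G DG dFG]; first by rewrite subr_gt0.
have dbG : d b.1 G < b.2 by have := d_tri b.1 F G; lra.
by apply: Cantor_Bernstein; apply: (@card_le_exp_converges _ _ _ Co Delta_gt0);
  [exact: unif b Bb F G DF DG dbF dbG | exact: unif b Bb G F DG DF dbG dbF].
Qed.

Theorem theorem1 (R : realType) (L : choiceType) (dist : L -> L -> R)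
    (d : chan R L -> chan R L -> R) (D : set (chan R L))
    (S : chan R L -> set (state R L)) :
  is_metric d ->
  steady_state_bundle dist d D S ->
  uniform_bundle d D S ->
  forall E E', D E -> D E' ->
  exists f : state R L -> state R L,
    [/\ forall r, S E r -> S E' (f r),
        forall r1 r2, S E r1 -> S E r2 -> f r1 = f r2 -> r1 = r2 &
        forall r', S E' r' -> exists2 r, S E r & f r = r'].
Proof.
move=> [_ [_ [_ [_ d_tri]]]] [_ _ D_conn _] unif E E' DE DE'.
have SEE' : S E #= S E'.
  apply: (@connected_in_locally_constant _ _ d D (fun F G => S F #= S G)) => //.
  - by move=> F G; apply: card_esym.
  - by move=> F G H; apply: card_eq_trans.
  exact: uniform_bundle_locally_card_eq.
have [f [f_fun f_inj f_surj]] := card_eq_set_bij SEE'.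
by exists f; split=> // r1 r2 SEr1 SEr2; apply: f_inj; apply: mem_set.
Qed.
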